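(* Let $a,b,k\in\mathbb{N}$ with $k\le\min(a,b)$ and $P=[a]\times[b]$ with the product order. Then $(\mathcal{A}_k(P),\le_k)\cong\mathcal{C}(a,k)\times\mathcal{C}(b,k)$ as posets.
   Context: $[n]=\{1,\dots,n\}$. For a finite poset $P$, $\mathcal{A}_k(P)$ is the set of antichains of $P$ of size $k$; for $A,B\in\mathcal{A}_k(P)$, $A\prec_k B$ means $A\setminus B=\{a\}$, $B\setminus A=\{b\}$ are singletons with $a<_P b$, and $\le_k$ is the reflexive transitive closure of $\prec_k$. For $k\le n$, $\mathcal{C}(n,k)$ is the set of $k$-element subsets of $[n]$ written as increasing sequences $(x_1<\dots<x_k)$, with $\mathbf{x}\le\mathbf{y}$ iff $x_i\le y_i$ for all $i$; products carry the product order. *)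

From Stdlib Require Import Relations.Relation_Operators.
From mathcomp Require Import all_boot.
Set Implicit Arguments. Unset Strict Implicit. Unset Printing Implicit Defensive.

Section Antichains.
Variables (T : finType) (le : rel T).

Definition slt (x y : T) : bool := le x y && (x != y).

Definition antichain (A : {set T}) : bool :=
  [forall x in A, forall y in A, le x y ==> (x == y)].

Definition antichain_k (k : nat) (A : {set T}) : bool :=
  antichain A && (#|A| == k).

Definition prec_k (k : nat) (A B : {set T}) : Prop :=
  antichain_k k A /\ antichain_k k B /\
  exists a b, A :\: B = [set a] /\ B :\: A = [set b] /\ slt a b.

Definition le_k (k : nat) : {set T} -> {set T} -> Prop := @clos_refl_trans {set T} (prec_k k).

End Antichains.

(* P = [a] x [b] with product order; [n] is modelled by 'I_n = {0,...,n-1} *)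
Definition grid_le (a b : nat) : rel ('I_a * 'I_b) :=
  fun p q => (p.1 <= q.1)%N && (p.2 <= q.2)%N.

Definition sorted_seq (n : nat) (X : {set 'I_n}) : seq nat :=
  sort leq [seq val x | x in X].

Definition C_le (n : nat) (X Y : {set 'I_n}) : bool :=
  all2 leq (sorted_seq X) (sorted_seq Y).

Definition Ak (a b k : nat) :=
  {A : {set 'I_a * 'I_b} | antichain_k (@grid_le a b) k A}.
Definition Cnk (n k : nat) := {X : {set 'I_n} | #|X| == k}.

(* An antichain A of the grid [a] x [b] has injective projections, and sorting
   by the first coordinate sorts the second one in reverse; so A is recovered from
   X = fst @: A and Y = snd @: A by pairing the point of X of rank i with the point
   of Y of rank k - 1 - i.  With r_X t = #{x in X | x < t}, the order of C(n,k)
   reads X <= X' iff r_X' <= r_X pointwise.  A step A <_k B moves one point up in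
   both coordinates, so it can only lower r_X and r_Y.  Conversely, if X < X',
   some x in X can be moved to x + 1, not in X, while staying below X'; on
   antichains this move of one first coordinate is a single <_k step, and second
   coordinates are handled by the symmetry (p, q) |-> (q, p) of the grid. *)

From Stdlib Require Import Relations.Relation_Operators.
From mathcomp Require Import all_boot zify.
Set Implicit Arguments. Unset Strict Implicit. Unset Printing Implicit Defensive.

Lemma imsetD (aT rT : finType) (f : aT -> rT) (A B : {set aT}) :
  {in A & B, injective f} -> f @: (A :\: B) = f @: A :\: f @: B.
Proof.
move=> injf; apply/setP => y; apply/imsetP/setDP.
  case=> x /setDP [xA xB] ->; split; first exact: imset_f.
  by apply/imsetP => -[z zB /(injf x z xA zB) eqxz]; rewrite eqxz zB in xB.
by case=> /imsetP [x xA ->] fxB; exists x => //; rewrite inE xA andbT;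
  apply: contra fxB => xB; apply: imset_f.
Qed.

Lemma imsetD1 (aT rT : finType) (f : aT -> rT) (A : {set aT}) x :
  {in A &, injective f} -> x \in A -> f @: (A :\ x) = f @: A :\ f x.
Proof. by move=> injf xA; rewrite imsetD ?imset_set1 // => y z yA /set1P ->; apply: injf. Qed.

Lemma setD_exchange (T : finType) (A : {set T}) p p' : p \in A -> p' \notin A ->
  A :\: (p' |: A :\ p) = [set p] /\ (p' |: A :\ p) :\: A = [set p'].
Proof.
move=> pA p'A; have p'p : p' != p by apply: contraNneq p'A => ->.
split; apply/setP => q; rewrite !inE.
  case: (eqVneq q p) => [->|_]; first by rewrite eq_sym (negbTE p'p) pA.
  by case: (q \in A); rewrite ?orbT ?andbF.
case: (eqVneq q p') => [->|_]; rewrite ?(negbTE p'A) ?andbF //=.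
by case: (q \in A); rewrite ?andbF.
Qed.

Lemma big_exchange (T : finType) (F : T -> nat) (A A' : {set T}) p p' :
  A :\: A' = [set p] -> A' :\: A = [set p'] ->
  \sum_(x in A') F x + F p = \sum_(x in A) F x + F p'.
Proof.
move=> dA dA'; rewrite (@big_setID _ _ _ _ A A') (@big_setID _ _ _ _ A' A) setIC.
by rewrite dA dA' !big_set1 addnAC.
Qed.

Section CountBelow.
Variables (T : finType) (f : T -> nat).

Definition count_below (A : {set T}) (t : nat) : nat := \sum_(x in A) (f x < t).

Lemma count_below_mono A : {homo count_below A : s t / s <= t}.
Proof.
move=> s t st; apply: leq_sum => x _.
by case: (ltnP (f x) s) => // /leq_trans /(_ st) ->.
Qed.

Lemma count_below_le_card A t : count_below A t <= #|A|.
Proof. by rewrite -sum1_card; apply: leq_sum => x _; apply: leq_b1. Qed.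

Lemma count_below_full A t : (forall x, f x < t) -> count_below A t = #|A|.
Proof. by move=> ft; rewrite -sum1_card; apply: eq_bigr => x _; rewrite ft. Qed.

End CountBelow.

Lemma antichainP (T : finType) (le : rel T) (A : {set T}) :
  reflect {in A &, forall x y, le x y -> x = y} (antichain le A).
Proof.
apply: (iffP forall_inP) => [acA x y xA yA lxy | acA x xA].
  by apply/eqP; move: (forall_inP (acA x xA) y yA); rewrite lxy.
by apply/forall_inP => y yA; apply/implyP => /(acA x y xA yA) ->.
Qed.

Section AntichainSteps.
Variables (T : finType) (le : rel T).
Implicit Types (A B : {set T}) (k : nat).

Lemma count_below_prec (f : T -> nat) k A B t :
  {homo f : x y / le x y >-> x <= y} ->
  prec_k le k A B -> count_below f B t <= count_below f A t.
Proof.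
move=> f_mono [_ [_ [p [p' [dA [dB /andP [lpp' _]]]]]]].
have := big_exchange (fun x => f x < t) dA dB.
rewrite -/(count_below f A t) -/(count_below f B t).
have : (f p' < t) <= (f p < t) by case: ltnP => // /(leq_ltn_trans (f_mono _ _ lpp')) ->.
lia.
Qed.

Lemma count_below_le_k (f : T -> nat) k A B t :
  {homo f : x y / le x y >-> x <= y} ->
  le_k le k A B -> count_below f B t <= count_below f A t.
Proof.
move=> f_mono; elim=> // [A1 B1 /count_below_prec | A1 B1 C1 _ h1 _ h2]; first exact.
exact: leq_trans h2 h1.
Qed.

Lemma antichain_exchange A p p' : transitive le ->
  antichain le A -> p \in A -> le p p' -> (forall r, r \in A -> le r p' -> le r p) ->
  antichain le (p' |: A :\ p).
Proof.
move=> le_trans /antichainP acA pA lpp' below; apply/antichainP => r s; rewrite !inE.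
move=> /predU1P [-> | /andP [rp rA]] /predU1P [-> | /andP [sp sA]] // lrs.
- by case/eqP: sp; apply/esym/acA => //; apply: le_trans lrs.
- by case/eqP: rp; apply: acA => //; apply: below.
- exact: acA.
Qed.

Lemma prec_k_exchange k A p p' :
  antichain_k le k A -> antichain le (p' |: A :\ p) -> p \in A -> p' \notin A ->
  slt le p p' -> prec_k le k A (p' |: A :\ p).
Proof.
move=> hA acA' pA p'A lpp'; have [dA dA'] := setD_exchange pA p'A.
split=> //; split; last by exists p, p'.
case/andP: hA => _ /eqP <-; rewrite /antichain_k acA' cardsU1 (cardsD1 p A) pA.
by rewrite in_setD1 (negbTE p'A) andbF /= eqxx.
Qed.

Section Embedding.
Variables (U : finType) (leU : rel U) (g : T -> U).
Hypotheses (g_inj : injective g) (g_le : forall x y, leU (g x) (g y) = le x y).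

Lemma antichain_k_imset k A : antichain_k le k A -> antichain_k leU k (g @: A).
Proof.
case/andP=> /antichainP acA cA; rewrite /antichain_k card_imset // cA andbT.
apply/antichainP => _ _ /imsetP [x xA ->] /imsetP [y yA ->].
by rewrite g_le => /(acA x y xA yA) ->.
Qed.

Lemma prec_k_imset k A B : prec_k le k A B -> prec_k leU k (g @: A) (g @: B).
Proof.
move=> [hA [hB [p [p' [dA [dB lpp']]]]]].
do 2 (split; first exact: antichain_k_imset).
exists (g p), (g p'); rewrite -!imsetD; try exact: in2W.
by rewrite dA dB !imset_set1 /slt g_le (inj_eq g_inj).
Qed.

Lemma le_k_imset k A B : le_k le k A B -> le_k leU k (g @: A) (g @: B).
Proof.
elim=> [A1 B1 /prec_k_imset | A1 | A1 B1 C1 _ h1 _ h2]; first exact: rt_step.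
  exact: rt_refl.
exact: rt_trans h2.
Qed.

End Embedding.
End AntichainSteps.

Notation rank := (count_below (@nat_of_ord _)).

Lemma nth_lt_count (s : seq nat) i t : sorted leq s -> i < size s ->
  (nth 0 s i < t) = (i < count (fun v => v < t) s).
Proof.
elim: s i => [|x s IH] i //= srt lti.
have x_le : all (leq x) s := order_path_min leq_trans srt.
case: (ltnP x t) => [xt | tx].
  by case: i lti => [|i] /=; rewrite ?xt // add1n !ltnS; apply: IH (path_sorted srt).
rewrite (@eq_in_count _ _ pred0) ?count_pred0 => [|v /(allP x_le) xv]; last first.
  by apply/negbTE; rewrite -leqNgt (leq_trans tx xv).
rewrite addn0 ltn0; apply/negbTE; rewrite -leqNgt.
by case: i lti => [|i] //= lti; apply: leq_trans tx (allP x_le _ (mem_nth 0 lti)).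
Qed.

Lemma all2_nthP (T : Type) (r : rel T) (x0 : T) (s t : seq T) : size s = size t ->
  reflect (forall i, i < size s -> r (nth x0 s i) (nth x0 t i)) (all2 r s t).
Proof.
move=> st; rewrite all2E st eqxx /=.
apply: (iffP (all_nthP (x0, x0))); rewrite size_zip st minnn => H i lti.
  by have := H i lti; rewrite nth_zip.
by rewrite nth_zip //; apply: H.
Qed.

Section Ranks.
Variable n : nat.
Implicit Types X Y : {set 'I_n}.

Lemma count_sorted_seq X t : count (fun v => v < t) (sorted_seq X) = rank X t.
Proof.
rewrite /sorted_seq count_sort /image_mem count_map.
by rewrite -sumn_count sumnE big_map big_enum.
Qed.

Lemma sorted_seq_sorted X : sorted leq (sorted_seq X).
Proof. exact: (sort_sorted leq_total). Qed.

Lemma size_sorted_seq X : size (sorted_seq X) = #|X|.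
Proof. by rewrite /sorted_seq size_sort /image_mem size_map cardE. Qed.

Lemma C_leP X Y : #|X| = #|Y| -> reflect (forall t, rank Y t <= rank X t) (C_le X Y).
Proof.
move=> cXY; have sX := sorted_seq_sorted X; have sY := sorted_seq_sorted Y.
have szX : size (sorted_seq X) = size (sorted_seq Y) by rewrite !size_sorted_seq.
apply: (iffP (all2_nthP _ 0 szX)) => [le_nth t | le_rank i lti].
  rewrite -!count_sorted_seq; case E: (count _ (sorted_seq Y)) => [//|j].
  have ltj : j < size (sorted_seq Y) by rewrite -E count_size.
  rewrite -nth_lt_count ?szX //; apply: leq_ltn_trans (le_nth j _) _; rewrite ?szX //.
  by rewrite nth_lt_count // E.
have lti' : i < size (sorted_seq Y) by rewrite -szX.
have := le_rank (nth 0 (sorted_seq Y) i).+1; rewrite -!count_sorted_seq => le_count.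
rewrite -ltnS nth_lt_count //; apply: leq_trans le_count.
by rewrite -nth_lt_count.
Qed.

Lemma rank_S X (x : 'I_n) : rank X x.+1 = rank X x + (x \in X).
Proof.
have ltS (y : 'I_n) : y != x -> (y < x.+1) = (y < x).
  by move=> yx; rewrite ltnS leq_eqVlt -[_ == _]/(y == x) (negbTE yx).
case: (boolP (x \in X)) => xX; last first.
  by rewrite addn0; apply: eq_bigr => y yX; rewrite ltS //; apply: contraNneq xX => <-.
rewrite /count_below !(bigD1 x xX) /= ltnSn ltnn add1n addn1; congr S.
by apply: eq_bigr => y /andP [_ yx]; rewrite ltS.
Qed.

Lemma rank_full X t : n <= t -> rank X t = #|X|.
Proof. by move=> nt; apply: count_below_full => x; apply: leq_trans nt. Qed.

Lemma rank_lt X (x : 'I_n) t : x \in X -> x < t -> rank X x < rank X t.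
Proof.
by move=> xX xt; apply: leq_trans (count_below_mono _ X xt); rewrite rank_S xX addn1.
Qed.

Lemma rank_lt_card X (x : 'I_n) : x \in X -> rank X x < #|X|.
Proof. by move=> xX; apply: leq_trans (count_below_le_card _ X x.+1); apply: rank_lt. Qed.

Lemma rank_inj X (x y : 'I_n) : x \in X -> y \in X -> rank X x = rank X y -> x = y.
Proof.
move=> xX yX exy; case: (ltngtP x y) => [xy | yx | /val_inj //].
  by move: (rank_lt xX xy); rewrite exy ltnn.
by move: (rank_lt yX yx); rewrite exy ltnn.
Qed.

Lemma rank_surj X j : j < #|X| -> exists2 x, x \in X & rank X x = j.
Proof.
move=> ltj; pose s := [seq rank X x | x : 'I_n <- enum X].
have s_uniq : uniq s.
  by rewrite map_inj_in_uniq ?enum_uniq // => x y; rewrite !mem_enum; apply: rank_inj.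
have s_sub : {subset s <= iota 0 #|X|}.
  by move=> v /mapP [x]; rewrite mem_enum => xX ->; rewrite mem_iota rank_lt_card.
have [|_ s_eq] := uniq_min_size s_uniq s_sub; first by rewrite size_iota size_map -cardE.
have /mapP [x] : j \in s by rewrite s_eq mem_iota.
by rewrite mem_enum => xX ->; exists x.
Qed.

Lemma eq_rank_set X Y : (forall t, rank X t = rank Y t) -> X = Y.
Proof.
move=> eqXY; apply/setP => x; have := eqXY x.+1.
by rewrite !rank_S eqXY => /addnI; case: (x \in X); case: (x \in Y).
Qed.

Lemma rank_dominance_eq X Y : #|X| = #|Y| -> (forall t, rank Y t <= rank X t) ->
  (forall x, x \in X -> rank X x.+1 <= rank Y x.+1) -> X = Y.
Proof.
move=> cXY dom tight; apply: eq_rank_set.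
elim=> [|t IH]; first by rewrite /count_below !big1.
have [tn | nt] := ltnP t n; last by rewrite !rank_full ?cXY // leqW.
set o := Ordinal tn; have := rank_S X o; have := rank_S Y o; have := dom t.+1.
rewrite /= IH; case: (boolP (o \in X)) => [/tight /= | _]; case: (o \in Y) => /=; lia.
Qed.

End Ranks.

Section ShiftSteps.
Variable n : nat.
Implicit Types X Y : {set 'I_n}.

Definition shift_step X X' : Prop :=
  exists x y : 'I_n, [/\ x \in X, y \notin X, val y = x.+1 & X' = y |: X :\ x].

Definition weight X : nat := \sum_(x in X) (x : nat).

Lemma shift_step_card X X' : shift_step X X' -> #|X'| = #|X|.
Proof.
move=> [x [y [xX yX _ ->]]]; rewrite cardsU1 (cardsD1 x X) xX in_setD1 (negbTE yX).
by rewrite andbF.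
Qed.

Lemma shift_steps_card X X' : clos_refl_trans _ shift_step X X' -> #|X'| = #|X|.
Proof. by elim=> // [X1 X2 /shift_step_card | X1 X2 X3 _ -> _ ->]. Qed.

Lemma shift_step_weight X X' : shift_step X X' -> weight X' = (weight X).+1.
Proof.
move=> [x [y [xX yX ey ->]]]; have [dX dX'] := setD_exchange xX yX.
have := big_exchange (fun z : 'I_n => z : nat) dX dX'; rewrite ey => e.
by apply/eqP; rewrite -(eqn_add2r x) addSn e addnS.
Qed.

Lemma weight_le X : weight X <= #|X| * n.
Proof. by rewrite -sum_nat_const; apply: leq_sum => x _; apply: ltnW. Qed.

Lemma exists_shift_step X Y : #|X| = #|Y| -> (forall t, rank Y t <= rank X t) -> X != Y ->
  exists2 X', shift_step X X' & forall t, rank Y t <= rank X' t.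
Proof.
move=> cXY dom neXY.
(* Move the largest x in X right after which r_X still exceeds r_Y. *)
pose P (x : 'I_n) := (x \in X) && (rank Y x.+1 < rank X x.+1).
have [x0 Px0] : exists x0, P x0.
  apply/existsP; apply: contraNT neXY => /existsPn noP.
  apply/eqP/rank_dominance_eq => // x xX.
  by move: (noP x); rewrite /P xX -leqNgt.
pose x := [arg max_(z > x0 | P z) val z].
have [/andP [xX ltx] xmax] : P x /\ forall z, P z -> z <= x.
  by rewrite /x; case: arg_maxnP => // z Pz zmax; split.
have xn : x.+1 < n.
  by rewrite ltnNge; apply: contraTN ltx => nx; rewrite !rank_full // cXY ltnn.
pose y := Ordinal xn.
have yX : y \notin X.
  apply/negP => yX; have /xmax : P y; last by rewrite ltnn.
  rewrite /P yX /= !(rank_S _ y) yX; have := leq_b1 (y \in Y).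
  by move: ltx; rewrite /= -[x.+1]/(y : nat); lia.
pose X' := y |: X :\ x; exists X'; first by exists x, y.
move: ltx; rewrite -[x.+1]/(y : nat) => ltx t; have [dX dX'] := setD_exchange xX yX.
have := big_exchange (fun z : 'I_n => z < t) dX dX'; rewrite -/(rank X t) -/(rank X' t) /=.
have [-> | neq] := eqVneq t y; first by rewrite leqnn ltnn; lia.
rewrite leq_eqVlt eq_sym (negbTE neq) /= => /addIn ->.
exact: dom.
Qed.

Lemma shift_steps_of_rank X Y : #|X| = #|Y| -> (forall t, rank Y t <= rank X t) ->
  clos_refl_trans _ shift_step X Y.
Proof.
have [m] := ubnP (#|X| * n - weight X); elim: m X => // m IH X ltm cXY dom.
have [-> | neXY] := eqVneq X Y; first exact: rt_refl.
have [X' st dom'] := exists_shift_step cXY dom neXY.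
have cX' := shift_step_card st; have wX' := shift_step_weight st.
apply: rt_trans (rt_step _ _ _ _ st) (IH X' _ _ dom'); last by rewrite cX'.
by have := weight_le X'; rewrite cX' wX'; lia.
Qed.

End ShiftSteps.

Arguments shift_step {n}.

Definition swap {T U : Type} (p : T * U) : U * T := (p.2, p.1).

Lemma swapK (T U : Type) : cancel (@swap T U) (@swap U T).
Proof. by case. Qed.

Section Grid.
Variables a b : nat.
Implicit Types (A : {set 'I_a * 'I_b}) (X : {set 'I_a}) (Y : {set 'I_b}).

Lemma grid_le_trans : transitive (@grid_le a b).
Proof.
move=> q p r /andP [pq1 pq2] /andP [qr1 qr2].
by rewrite /grid_le (leq_trans pq1 qr1) (leq_trans pq2 qr2).
Qed.

Lemma grid_le_swap (p q : 'I_a * 'I_b) : grid_le (swap p) (swap q) = grid_le p q.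
Proof. by rewrite /grid_le andbC. Qed.

Lemma antichain_fst_inj A : antichain (@grid_le a b) A -> {in A &, injective fst}.
Proof.
move=> /antichainP acA p q pA qA e; have [pq | qp] := leqP p.2 q.2.
  by apply: acA; rewrite // /grid_le e leqnn.
by apply/esym/acA; rewrite // /grid_le e leqnn (ltnW qp).
Qed.

Lemma antichain_snd_inj A : antichain (@grid_le a b) A -> {in A &, injective snd}.
Proof.
move=> /antichainP acA p q pA qA e; have [pq | qp] := leqP p.1 q.1.
  by apply: acA; rewrite // /grid_le e leqnn andbT.
by apply/esym/acA; rewrite // /grid_le e leqnn (ltnW qp).
Qed.

Lemma antichain_lt_exactly_one A p q : antichain (@grid_le a b) A -> p \in A -> q \in A -> q != p ->
  (q.1 < p.1) + (q.2 < p.2) = 1.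
Proof.
move=> /antichainP acA pA qA qp.
case: (ltnP q.1 p.1) => q1; case: (ltnP q.2 p.2) => q2 //.
  by case/eqP: qp; apply: acA; rewrite // /grid_le (ltnW q1) (ltnW q2).
by case/eqP: qp; apply/esym/acA; rewrite // /grid_le q1 q2.
Qed.

Lemma rank_fst A t : antichain (@grid_le a b) A ->
  rank (fst @: A) t = \sum_(q in A) (q.1 < t).
Proof. by move=> /antichain_fst_inj; apply: big_imset. Qed.

Lemma rank_snd A t : antichain (@grid_le a b) A ->
  rank (snd @: A) t = \sum_(q in A) (q.2 < t).
Proof. by move=> /antichain_snd_inj; apply: big_imset. Qed.

Lemma rank_fst_snd A p : antichain (@grid_le a b) A -> p \in A ->
  rank (fst @: A) p.1 + rank (snd @: A) p.2 + 1 = #|A|.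
Proof.
move=> acA pA; rewrite rank_fst // rank_snd // -big_split (bigD1 p) //= !ltnn.
rewrite (cardsD1 p A) pA add1n addn1 -sum1_card; congr S.
apply: eq_big => [q | q /andP [qA qp]]; first by rewrite !inE andbC.
exact: antichain_lt_exactly_one acA pA qA qp.
Qed.

Definition antichain_of X Y : {set 'I_a * 'I_b} :=
  [set q | [&& q.1 \in X, q.2 \in Y & rank X q.1 + rank Y q.2 + 1 == #|X|]].

Lemma antichain_antichain_of X Y : antichain (@grid_le a b) (antichain_of X Y).
Proof.
apply/antichainP => p q; rewrite !inE => /and3P [p1 p2 /eqP ep] /and3P [q1 q2 /eqP eq].
case/andP=> /(count_below_mono (@nat_of_ord a) X) l1 /(count_below_mono (@nat_of_ord b) Y) l2.
have /eq_leqif := leqif_add (leqif_eq l1) (leqif_eq l2).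
rewrite -(eqn_add2r 1) ep eq eqxx => /esym /andP [/eqP e1 /eqP e2].
by apply: injective_projections; [apply: (rank_inj p1 q1) | apply: (rank_inj p2 q2)].
Qed.

Section AntichainOf.
Variables (X : {set 'I_a}) (Y : {set 'I_b}).
Hypothesis cXY : #|X| = #|Y|.

Lemma fst_antichain_of : fst @: antichain_of X Y = X.
Proof.
apply/setP => x; apply/imsetP/idP => [[q] | xX]; first by rewrite inE => /and3P [? _ _] ->.
have ltx := rank_lt_card xX.
have [y yY ry] : exists2 y, y \in Y & rank Y y = #|X| - (rank X x).+1.
  by apply: rank_surj; rewrite -cXY ltn_subrL (leq_ltn_trans (leq0n _) ltx).
exists (x, y) => //; rewrite inE /= xX yY ry addn1 -addnS subnSK // subnKC ?(ltnW ltx) //.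
exact/eqP.
Qed.

Lemma card_antichain_of : #|antichain_of X Y| = #|X|.
Proof.
rewrite -{2}fst_antichain_of card_in_imset //.
exact/antichain_fst_inj/antichain_antichain_of.
Qed.

End AntichainOf.

Lemma antichain_of_proj A :
  antichain (@grid_le a b) A -> antichain_of (fst @: A) (snd @: A) = A.
Proof.
move=> acA; have cA1 := card_in_imset (antichain_fst_inj acA).
have cA2 := card_in_imset (antichain_snd_inj acA).
apply/esym/eqP; rewrite eqEcard card_antichain_of ?cA1 ?cA2 // leqnn andbT.
apply/subsetP => p pA; rewrite inE !imset_f //= cA1.
by rewrite rank_fst_snd.
Qed.

End Grid.

Lemma antichain_of_swap a b (X : {set 'I_a}) (Y : {set 'I_b}) :
  #|X| = #|Y| -> swap @: antichain_of X Y = antichain_of Y X.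
Proof.
move=> cXY; rewrite (can2_imset_pre _ (@swapK _ _) (@swapK _ _)); apply/setP => q.
by rewrite !inE /= andbCA (addnC (rank X _)) cXY.
Qed.

Lemma snd_antichain_of a b (X : {set 'I_a}) (Y : {set 'I_b}) :
  #|X| = #|Y| -> snd @: antichain_of X Y = Y.
Proof.
move=> cXY; rewrite -[snd]/(fst \o swap) imset_comp antichain_of_swap //.
exact: fst_antichain_of.
Qed.

Section GridShifts.
Variables a b : nat.
Implicit Types (X : {set 'I_a}) (Y : {set 'I_b}).

Lemma prec_k_shift X X' Y : #|X| = #|Y| -> shift_step X X' ->
  prec_k (@grid_le a b) #|X| (antichain_of X Y) (antichain_of X' Y).
Proof.
move=> cXY [x [x' [xX x'X ex' ->]]]; set A := antichain_of X Y.
have acA : antichain (@grid_le a b) A := antichain_antichain_of X Y.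
have fstA : fst @: A = X := fst_antichain_of cXY.
have [p pA px] : exists2 p, p \in A & p.1 = x.
  by move: xX; rewrite -fstA => /imsetP [p pA ->]; exists p.
pose p' := (x', p.2).
have p'A : p' \notin A by apply: contra x'X => p'A; rewrite -fstA (imset_f fst p'A).
have lpp' : slt (@grid_le a b) p p'.
  rewrite /slt /grid_le /= px ex' leqnSn leqnn /=.
  by apply: contraNneq p'A => <-.
have below r : r \in A -> grid_le r p' -> grid_le r p.
  move=> rA /andP [/= r1 r2]; rewrite /grid_le r2 andbT px -ltnS -ex' ltn_neqAle r1 andbT.
  have r1X : r.1 \in X by rewrite -fstA imset_f.
  by apply: contraNneq x'X => /val_inj <-.
have acA' := antichain_exchange (@grid_le_trans a b) acA pA (proj1 (andP lpp')) below.
have -> : antichain_of (x' |: X :\ x) Y = p' |: A :\ p.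
  rewrite -[RHS]antichain_of_proj // !imsetU1 (imsetD1 (antichain_fst_inj acA) pA).
  rewrite (imsetD1 (antichain_snd_inj acA) pA) setD1K ?(imset_f snd pA) //.
  by congr (antichain_of (_ |: (_ :\ _)) _); apply/esym; [exact: fstA | exact: px |
    exact: snd_antichain_of].
by apply: prec_k_exchange => //; rewrite /antichain_k acA (card_antichain_of cXY) /=.
Qed.

Lemma le_k_shift_steps X X' Y : clos_refl_trans _ shift_step X X' -> #|X| = #|Y| ->
  le_k (@grid_le a b) #|X| (antichain_of X Y) (antichain_of X' Y).
Proof.
elim=> [X1 X2 st cXY | X1 _ | X1 X2 X3 st12 IH12 _ IH23 cXY].
- exact/rt_step/prec_k_shift.
- exact: rt_refl.
- apply: rt_trans (IH12 cXY) _; rewrite -(shift_steps_card st12).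
  by apply: IH23; rewrite (shift_steps_card st12).
Qed.

End GridShifts.

Lemma le_k_antichain_of a b k (X X' : {set 'I_a}) (Y Y' : {set 'I_b}) :
  #|X| = k -> #|X'| = k -> #|Y| = k -> #|Y'| = k ->
  (forall t, rank X' t <= rank X t) -> (forall t, rank Y' t <= rank Y t) ->
  le_k (@grid_le a b) k (antichain_of X Y) (antichain_of X' Y').
Proof.
move=> cX cX' cY cY' domX domY.
have stX := shift_steps_of_rank (etrans cX (esym cX')) domX.
have stY := shift_steps_of_rank (etrans cY (esym cY')) domY.
apply: rt_trans (_ : le_k _ k _ (antichain_of X' Y)) _.
  by rewrite -cX; apply: le_k_shift_steps stX _; rewrite cX cY.
have -> : antichain_of X' Y = swap @: antichain_of Y X' by rewrite antichain_of_swap ?cX' ?cY.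
have -> : antichain_of X' Y' = swap @: antichain_of Y' X'.
  by rewrite antichain_of_swap ?cX' ?cY'.
apply: (le_k_imset (can_inj (@swapK _ _)) (@grid_le_swap b a)).
by rewrite -cY; apply: le_k_shift_steps stY _; rewrite cX' cY.
Qed.

Section Bijection.
Variables a b k : nat.

Lemma card_fst_Ak (A : Ak a b k) : #|fst @: val A| == k.
Proof. by case/andP: (valP A) => /antichain_fst_inj/card_in_imset ->. Qed.

Lemma card_snd_Ak (A : Ak a b k) : #|snd @: val A| == k.
Proof. by case/andP: (valP A) => /antichain_snd_inj/card_in_imset ->. Qed.

Definition Ak_proj (A : Ak a b k) : Cnk a k * Cnk b k :=
  (exist (fun X : {set 'I_a} => #|X| == k) _ (card_fst_Ak A),
   exist (fun Y : {set 'I_b} => #|Y| == k) _ (card_snd_Ak A)).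

Lemma antichain_k_of (XY : Cnk a k * Cnk b k) :
  antichain_k (@grid_le a b) k (antichain_of (val XY.1) (val XY.2)).
Proof.
case: XY => [[X cX] [Y cY]] /=; move/eqP: cX => cX; move/eqP: cY => cY.
by rewrite /antichain_k antichain_antichain_of card_antichain_of cX ?cY /=.
Qed.

Definition Ak_of (XY : Cnk a k * Cnk b k) : Ak a b k :=
  exist (antichain_k (@grid_le a b) k) _ (antichain_k_of XY).

Lemma Ak_projK : cancel Ak_proj Ak_of.
Proof. by move=> A; apply/val_inj/antichain_of_proj; case/andP: (valP A). Qed.

Lemma Ak_ofK : cancel Ak_of Ak_proj.
Proof.
move=> [[X cX] [Y cY]]; have cXY : #|X| = #|Y| by rewrite (eqP cX) (eqP cY).
by congr pair; apply: val_inj; [apply: fst_antichain_of | apply: snd_antichain_of].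
Qed.

Lemma le_k_Ak_proj (A B : Ak a b k) :
  le_k (@grid_le a b) k (val A) (val B) <->
  C_le (val (Ak_proj A).1) (val (Ak_proj B).1) && C_le (val (Ak_proj A).2) (val (Ak_proj B).2).
Proof.
have [acA _] := andP (valP A); have [acB _] := andP (valP B).
have [/eqP cA1 /eqP cA2] := (card_fst_Ak A, card_snd_Ak A).
have [/eqP cB1 /eqP cB2] := (card_fst_Ak B, card_snd_Ak B).
have c1 : #|fst @: val A| = #|fst @: val B| by rewrite cA1 cB1.
have c2 : #|snd @: val A| = #|snd @: val B| by rewrite cA2 cB2.
split=> [leAB | /andP [/(C_leP c1) domX /(C_leP c2) domY]].
  apply/andP; split; [apply/(C_leP c1) | apply/(C_leP c2)] => t /=.
    by rewrite !rank_fst //; apply: count_below_le_k leAB => p q /andP [].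
  by rewrite !rank_snd //; apply: count_below_le_k leAB => p q /andP [].
have := le_k_antichain_of cA1 cB1 cA2 cB2 domX domY.
by rewrite !antichain_of_proj.
Qed.

End Bijection.

Unset Implicit Arguments.

Theorem proposition3p1 (a b k : nat) (hk : (k <= minn a b)%N) :
  exists f : Ak a b k -> Cnk a k * Cnk b k,
    bijective f /\
    forall A B : Ak a b k,
      le_k (@grid_le a b) k (val A) (val B) <->
      (C_le (val (f A).1) (val (f B).1) && C_le (val (f A).2) (val (f B).2)).
Proof.
exists (@Ak_proj a b k); split; last exact: le_k_Ak_proj.
exact: Bijective (@Ak_projK a b k) (@Ak_ofK a b k).
Qed.
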